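(* Let $\mathcal C$ be a full subcategory of grading-restricted generalized $V$-modules for a vertex operator algebra $V$ such that $0\in\mathcal C$, $\mathcal C$ is closed under submodules, quotients and finite direct sums, and every module in $\mathcal C$ is finitely generated. For a weak $V$-module $X$, let $I_X$ be the set of submodules of $X$ that are objects of $\mathcal C$, directed by inclusion, let $\alpha_X:I_X\to\mathcal C$ be the direct system $W\mapsto W$ with inclusions as transition maps, and let $Q_X:\varinjlim\alpha_X\to X$ be the unique $V$-homomorphism with $Q_X\circ\phi_W=i_W$ for all $W\in I_X$, where $i_W:W\to X$ is the inclusion and $\phi_W:W\to\varinjlim\alpha_X$ are the canonical maps of the direct limit in the category of weak $V$-modules. Then $Q_X$ is injective for every weak module $X$, and $Q_X$ is surjective if and only if $X$ is an object of $\mathrm{Ind}(\mathcal C)$.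
   Context: $\mathrm{Ind}(\mathcal C)$ (the direct limit completion) is the full subcategory of weak $V$-modules isomorphic to direct limits, in the category of weak $V$-modules, of direct systems $\alpha:I\to\mathcal C$ indexed by directed sets. *)

(* Vertex operator algebras and their modules, written in
   terms of modes:  Y(v,x) = \sum_n v_n x^{-n-1}, encoded as  Y v n. *)
From mathcomp Require Import all_boot all_algebra.
From mathcomp Require Import complex Rstruct.
Set Implicit Arguments. Unset Strict Implicit. Unset Printing Implicit Defensive.
Import GRing.Theory.
Local Open Scope ring_scope.

Definition Cc : fieldType := (Rdefinitions.R)[i].

Definition binC (m : int) (i : nat) : Cc :=
  (\prod_(j < i) (m%:~R - (j : nat)%:R)) / (i`!)%:R.

Section VertexDefs.
Variables (U W : lmodType Cc).

Definition modes_bilinear (Y : U -> int -> W -> W) : Prop :=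
  (forall u n (a : Cc) (x y : W), Y u n (a *: x + y) = a *: Y u n x + Y u n y) /\
  (forall n w (a : Cc) (u v : U), Y (a *: u + v) n w = a *: Y u n w + Y v n w).

(* lower truncation: Y(u,x)w has only finitely many negative powers of x *)
Definition truncation (Y : U -> int -> W -> W) : Prop :=
  forall u w, exists N : int, forall n : int, N <= n -> Y u n w = 0.

(* Jacobi identity in component form (Borcherds identity); all three sums
   have only finitely many nonzero terms, so we require the truncated sums to
   agree for all sufficiently large truncation indices K. *)
Definition borcherds (YV : U -> int -> U -> U) (Y : U -> int -> W -> W) : Prop :=
  forall (u v : U) (w : W) (l m n : int), exists N : nat, forall K : nat, (N <= K)%N ->
    \sum_(i < K) binC m i *: Y (YV u (l + (i : nat)%:Z) v) (m + n - (i : nat)%:Z) w =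
    \sum_(i < K) ((-1) ^+ i * binC l i) *:
        (Y u (l + m - (i : nat)%:Z) (Y v (n + (i : nat)%:Z) w)
         - (-1) ^+ (absz l) *: Y v (l + n - (i : nat)%:Z) (Y u (m + (i : nat)%:Z) w)).
End VertexDefs.

Definition shiftpow (W : lmodType Cc) (L0 : W -> W) (h : Cc) (k : nat) (w : W) : W :=
  iter k (fun x => L0 x - h *: x) w.

Definition is_VOA (V : lmodType Cc) (Y : V -> int -> V -> V) (vac om : V) (c : Cc) : Prop :=
  let L := fun (n : int) => Y om (n + 1) in
  modes_bilinear Y /\ truncation Y /\
      (forall n (v : V), Y vac n v = if n == -1 then v else 0) /\
      ((forall (v : V) (n : int), 0 <= n -> Y v n vac = 0) /\ (forall v, Y v (-1) vac = v)) /\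
      borcherds Y Y /\
      (forall (m n : int) (v : V),
          L m (L n v) - L n (L m v) =
          (m - n)%:~R *: L (m + n) v
          + (if m + n == 0 then (((m ^+ 3 - m)%:~R / 12%:R) * c) *: v else 0)) /\
      (forall (v : V) (n : int), Y (L (-1) v) n = fun w => (- n%:~R) *: Y v (n - 1) w) /\
      (* grading: V = (+)_{n in Z} V_(n), V_(n) = {v | L(0) v = n v},
         dim V_(n) < oo, V_(n) = 0 for n sufficiently negative *)
      [/\ (forall v : V, exists s : seq (int * V),
             (forall p, p \in s -> L 0 p.2 = p.1%:~R *: p.2) /\ v = \sum_(p <- s) p.2),
          (forall n : int, exists s : seq V, forall v, L 0 v = n%:~R *: v ->
             exists a : 'I_(size s) -> Cc, v = \sum_(i < size s) a i *: s`_i)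
        & (exists N : int, forall n : int, n < N -> forall v, L 0 v = n%:~R *: v -> v = 0)].

Record VOA := MkVOA {
  vspace : lmodType Cc;
  vY : vspace -> int -> vspace -> vspace;
  vvac : vspace;
  vomega : vspace;
  vcc : Cc;
  vax : is_VOA vY vvac vomega vcc }.

Definition is_weak_module (V : VOA) (W : lmodType Cc) (Y : vspace V -> int -> W -> W) : Prop :=
  [/\ modes_bilinear Y, truncation Y,
      (forall n (w : W), Y (vvac V) n w = if n == -1 then w else 0)
    & borcherds (@vY V) Y].

Record wmod (V : VOA) := MkWmod {
  wcar : lmodType Cc;
  wY : vspace V -> int -> wcar -> wcar;
  wax : is_weak_module wY }.

Section Modules.
Variable V : VOA.

Definition is_hom (M N : wmod V) (f : wcar M -> wcar N) : Prop :=
  (forall (a : Cc) x y, f (a *: x + y) = a *: f x + f y) /\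
  (forall u n x, f (wY u n x) = wY u n (f x)).

Definition submodule (M : wmod V) (S : wcar M -> Prop) : Prop :=
  [/\ S 0, (forall (a : Cc) x y, S x -> S y -> S (a *: x + y))
    & (forall u n x, S x -> S (wY u n x))].

Definition L0 (M : wmod V) : wcar M -> wcar M := wY (vomega V) 1.

Definition gen_eigen (M : wmod V) (h : Cc) (w : wcar M) : Prop :=
  exists k : nat, shiftpow (@L0 M) h k w = 0.

(* grading-restricted generalized V-module: W = (+)_{h in C} W_[h] with
   W_[h] the generalized L(0)-eigenspaces, dim W_[h] < oo, and for each h,
   W_[h+n] = 0 for n in Z sufficiently negative. *)
Definition grading_restricted (M : wmod V) : Prop :=
  [/\ (forall w : wcar M, exists s : seq (Cc * wcar M),
         (forall p, p \in s -> gen_eigen p.1 p.2) /\ w = \sum_(p <- s) p.2),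
      (forall h : Cc, exists s : seq (wcar M), forall w, gen_eigen h w ->
         exists a : 'I_(size s) -> Cc, w = \sum_(i < size s) a i *: s`_i)
    & (forall h : Cc, exists N : int, forall n : int, n < N ->
         forall w : wcar M, gen_eigen (h + n%:~R) w -> w = 0)].

Definition finitely_generated (M : wmod V) : Prop :=
  exists s : seq (wcar M), forall S, submodule S ->
    (forall x, x \in s -> S x) -> forall w, S w.

(* A full subcategory C of weak modules is given by its class of objects. *)
Definition modclass := wmod V -> Prop.

Definition sub_in (C : modclass) (M : wmod V) (S : wcar M -> Prop) : Prop :=
  exists (N : wmod V) (f : wcar N -> wcar M),
    [/\ C N, is_hom f, injective f & forall x, S x <-> exists y, f y = x].

Definition good_class (C : modclass) : Prop :=
  [/\ (forall M, C M -> grading_restricted M /\ finitely_generated M),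
      (exists M, C M /\ forall x : wcar M, x = 0),
      (forall M, C M -> forall S : wcar M -> Prop, submodule S -> sub_in C S),
      (forall M, C M -> forall S : wcar M -> Prop, submodule S ->
         exists (N : wmod V) (f : wcar M -> wcar N),
           [/\ C N, is_hom f, (forall y, exists x, f x = y)
             & forall x, f x = 0 <-> S x])
    &
      (forall M1 M2, C M1 -> C M2 ->
         exists (N : wmod V) (i1 : wcar M1 -> wcar N) (i2 : wcar M2 -> wcar N),
           [/\ C N, is_hom i1, is_hom i2 &
               forall z, exists a b, z = i1 a + i2 b /\
                 forall a' b', z = i1 a' + i2 b' -> a' = a /\ b' = b])].

Definition directed (I : Type) (le : I -> I -> Prop) : Prop :=
  [/\ (exists i : I, True), (forall i, le i i),
      (forall i j k, le i j -> le j k -> le i k)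
    & (forall i j, exists k, le i k /\ le j k)].

Definition direct_system (C : modclass) (I : Type) (le : I -> I -> Prop)
    (obj : I -> wmod V) (f : forall i j, wcar (obj i) -> wcar (obj j)) : Prop :=
  [/\ directed le, (forall i, C (obj i)),
      (forall i j, le i j -> is_hom (f i j)),
      (forall i x, f i i x = x)
    & (forall i j k x, le i j -> le j k -> f j k (f i j x) = f i k x)].

Definition cocone (I : Type) (le : I -> I -> Prop)
    (obj : I -> wmod V) (f : forall i j, wcar (obj i) -> wcar (obj j))
    (L : wmod V) (phi : forall i, wcar (obj i) -> wcar L) : Prop :=
  (forall i, is_hom (phi i)) /\
  (forall i j x, le i j -> phi j (f i j x) = phi i x).

Definition is_direct_limit (I : Type) (le : I -> I -> Prop)
    (obj : I -> wmod V) (f : forall i j, wcar (obj i) -> wcar (obj j))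
    (L : wmod V) (phi : forall i, wcar (obj i) -> wcar L) : Prop :=
  cocone le f phi /\
  forall (Y : wmod V) (psi : forall i, wcar (obj i) -> wcar Y),
    cocone le f psi ->
    exists h : wcar L -> wcar Y,
      [/\ is_hom h, (forall i x, h (phi i x) = psi i x)
        & forall h' : wcar L -> wcar Y, is_hom h' ->
            (forall i x, h' (phi i x) = psi i x) -> forall z, h' z = h z].

Definition in_Ind (C : modclass) (X : wmod V) : Prop :=
  exists (I : Type) (le : I -> I -> Prop) (obj : I -> wmod V)
         (f : forall i j, wcar (obj i) -> wcar (obj j))
         (L : wmod V) (phi : forall i, wcar (obj i) -> wcar L)
         (g : wcar L -> wcar X),
    [/\ direct_system C le f, is_direct_limit le f phi, is_hom g & bijective g].

Definition IX (C : modclass) (X : wmod V) : Type :=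
  { S : wcar X -> Prop | submodule S /\ sub_in C S }.

(* A family of maps out of the submodules W in I_X; the map on W is
   represented by a function on X of which only the restriction to W matters.
   Cocone over alpha_X (alpha_X(W) = W, transition maps = inclusions). *)
Definition cocone_X (C : modclass) (X : wmod V) (L : wmod V)
    (phi : IX C X -> wcar X -> wcar L) : Prop :=
  (forall W : IX C X,
     (forall (a : Cc) x y, sval W x -> sval W y -> phi W (a *: x + y) = a *: phi W x + phi W y) /\
     (forall u n x, sval W x -> phi W (wY u n x) = wY u n (phi W x))) /\
  (forall (W W' : IX C X) x, (forall y, sval W y -> sval W' y) -> sval W x ->
     phi W' x = phi W x).

Definition is_direct_limit_X (C : modclass) (X : wmod V) (L : wmod V)
    (phi : IX C X -> wcar X -> wcar L) : Prop :=
  cocone_X phi /\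
  forall (Y : wmod V) (psi : IX C X -> wcar X -> wcar Y),
    cocone_X psi ->
    exists h : wcar L -> wcar Y,
      [/\ is_hom h, (forall (W : IX C X) x, sval W x -> h (phi W x) = psi W x)
        & forall h' : wcar L -> wcar Y, is_hom h' ->
            (forall (W : IX C X) x, sval W x -> h' (phi W x) = psi W x) ->
            forall z, h' z = h z].

End Modules.

(* The argument rests on one general fact about direct limits of weak
   modules: a direct limit over a directed set is the union of the images of
   its canonical maps (the union of these images is a submodule through which
   the universal property factors, hence it is everything).  Then
   - injectivity: two elements of L come from a common W in I_X, on which
     Q composed with phi_W is the inclusion;
   - surjective => Ind(C): Q is then an isomorphism from lim alpha_X;
   - Ind(C) => surjective: every x in X = lim beta comes from some beta(i) in
     C, whose image is a member W of I_X containing x, so x = Q (phi_W x). *)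
From HB Require Import structures.
From mathcomp Require Import all_boot all_algebra.
From Stdlib Require Import ClassicalEpsilon ProofIrrelevance.
Set Implicit Arguments. Unset Strict Implicit. Unset Printing Implicit Defensive.
Import GRing.Theory.
Local Open Scope ring_scope.

Definition is_linear (A B : lmodType Cc) (f : A -> B) : Prop :=
  forall (a : Cc) x y, f (a *: x + y) = a *: f x + f y.

Section Linear.
Variables (A B : lmodType Cc) (f : A -> B).
Hypothesis f_lin : is_linear f.

Lemma lin0 : f 0 = 0.
Proof.
have := f_lin 1 0 0; rewrite !scale1r addr0 => e.
by apply: (@addrI _ (f 0)); rewrite -e addr0.
Qed.

Lemma linD x y : f (x + y) = f x + f y.
Proof. by have := f_lin 1 x y; rewrite !scale1r. Qed.

Lemma linB x y : f (x - y) = f x - f y.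
Proof.
have linZ a z : f (a *: z) = a *: f z by have := f_lin a z 0; rewrite lin0 !addr0.
by rewrite linD -scaleN1r linZ scaleN1r.
Qed.
End Linear.

Section SubmoduleAsModule.
Variables (V : VOA) (M : wmod V) (P : wcar M -> Prop).
Hypothesis hP : submodule P.

Definition subT := {z : wcar M | P z}.

Lemma subT_eq (x y : subT) : sval x = sval y -> x = y.
Proof. case: x => x px; case: y => y py /= e; subst y; f_equal; exact: proof_irrelevance. Qed.

Definition subT_pinv (z : wcar M) : option subT :=
  match excluded_middle_informative (P z) with
  | left h => Some (exist _ z h) | right _ => None end.

Lemma subT_pK : pcancel (@sval _ P) subT_pinv.
Proof.
case=> z pz; rewrite /subT_pinv /=; case: excluded_middle_informative => h //.
by f_equal; apply: subT_eq.
Qed.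
HB.instance Definition _ := Choice.copy subT (pcan_type subT_pK).

Lemma P0 : P 0. Proof. by case: hP. Qed.
Lemma Plin a x y : P x -> P y -> P (a *: x + y). Proof. by case: hP => _ h _; apply: h. Qed.
Lemma PY u n x : P x -> P (wY u n x). Proof. by case: hP => _ _ h; apply: h. Qed.
Lemma Padd x y : P x -> P y -> P (x + y).
Proof. by move=> px py; have := Plin 1 px py; rewrite scale1r. Qed.
Lemma Pscale a x : P x -> P (a *: x).
Proof. by move=> px; have := Plin a px P0; rewrite addr0. Qed.
Lemma Popp x : P x -> P (- x).
Proof. by move=> px; have := Pscale (-1) px; rewrite scaleN1r. Qed.

Definition s0 : subT := exist _ 0 P0.
Definition sopp (x : subT) : subT := exist _ (- sval x) (Popp (svalP x)).
Definition sadd (x y : subT) : subT := exist _ (sval x + sval y) (Padd (svalP x) (svalP y)).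
Definition sscale (a : Cc) (x : subT) : subT := exist _ (a *: sval x) (Pscale a (svalP x)).

Lemma saddA : associative sadd. Proof. by move=> x y z; apply: subT_eq; rewrite /= addrA. Qed.
Lemma saddC : commutative sadd. Proof. by move=> x y; apply: subT_eq; rewrite /= addrC. Qed.
Lemma sadd0 : left_id s0 sadd. Proof. by move=> x; apply: subT_eq; rewrite /= add0r. Qed.
Lemma saddN : left_inverse s0 sopp sadd. Proof. by move=> x; apply: subT_eq; rewrite /= addNr. Qed.
HB.instance Definition _ := GRing.isZmodule.Build subT saddA saddC sadd0 saddN.

Lemma sscaleA a b v : sscale a (sscale b v) = sscale (a * b) v.
Proof. by apply: subT_eq; rewrite /= scalerA. Qed.
Lemma sscale1 : left_id 1 sscale. Proof. by move=> x; apply: subT_eq; rewrite /= scale1r. Qed.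
Lemma sscaleDr : right_distributive sscale +%R.
Proof. by move=> a x y; apply: subT_eq; rewrite /= scalerDr. Qed.
Lemma sscaleDl v : {morph sscale^~ v: a b / a + b}.
Proof. by move=> a b; apply: subT_eq; rewrite /= scalerDl. Qed.
HB.instance Definition _ := GRing.Zmodule_isLmodule.Build Cc subT sscaleA sscale1 sscaleDr sscaleDl.

Definition subLT : lmodType Cc := subT.

Lemma sval_sum I (r : seq I) (F : I -> subLT) (Q : pred I) :
  sval (\sum_(i <- r | Q i) F i) = \sum_(i <- r | Q i) sval (F i).
Proof. exact: (big_morph (@sval _ P)). Qed.

Definition sY u n (x : subLT) : subLT := exist _ (wY u n (sval x)) (PY u n (svalP x)).

Lemma sY_ax : is_weak_module sY.
Proof.
case: (wax M) => [[bl1 bl2] tr vac bor]; split.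
- split=> *; apply: subT_eq => /=; [exact: bl1 | exact: bl2].
- move=> u w; have [N hN] := tr u (sval w); exists N => n hn; apply: subT_eq; exact: hN.
- by move=> n w; apply: subT_eq; rewrite /= vac; case: (n == -1).
- move=> u v w l m n; have [N hN] := bor u v (sval w) l m n; exists N => K hK.
  apply: subT_eq; rewrite !sval_sum; exact: hN.
Qed.

Definition subW : wmod V := MkWmod sY_ax.

Lemma submodule_as_image : exists (N : wmod V) (i : wcar N -> wcar M),
  [/\ is_hom i, injective i & forall x, P x <-> exists y, i y = x].
Proof.
exists subW, (@sval _ P); split => //.
- by move=> x y; apply: subT_eq.
- move=> x; split; first by move=> px; exists (exist _ x px).
  by case=> y <-; exact: svalP.
Qed.
End SubmoduleAsModule.

Section Homomorphisms.
Variable V : VOA.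

Lemma wY_lin (M : wmod V) u n : is_linear (@wY V M u n).
Proof. by case: (wax M) => [[h _] _ _ _]. Qed.

Lemma hom_lin (M N : wmod V) (f : wcar M -> wcar N) : is_hom f -> is_linear f.
Proof. by case. Qed.

Lemma hom_comp (M N K : wmod V) (f : wcar M -> wcar N) (g : wcar N -> wcar K) :
  is_hom f -> is_hom g -> is_hom (fun x => g (f x)).
Proof. by move=> [f1 f2] [g1 g2]; split=> *; rewrite ?f1 ?g1 ?f2 ?g2. Qed.

Lemma choice_fun (A : Type) (B : A -> Type) (R : forall a, B a -> Prop) :
  (forall a, inhabited (B a)) -> (forall a, exists b, R a b) ->
  exists g : forall a, B a, forall a, R a (g a).
Proof.
move=> inh ex; exists (fun a => epsilon (inh a) (R a)) => a.
exact: epsilon_spec.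
Qed.

Lemma direct_sum_extend (M1 M2 N X : wmod V)
    (i1 : wcar M1 -> wcar N) (i2 : wcar M2 -> wcar N)
    (f1 : wcar M1 -> wcar X) (f2 : wcar M2 -> wcar X) :
  is_hom i1 -> is_hom i2 -> is_hom f1 -> is_hom f2 ->
  (forall z, exists a b, z = i1 a + i2 b /\
     forall a' b', z = i1 a' + i2 b' -> a' = a /\ b' = b) ->
  exists F : wcar N -> wcar X,
    [/\ is_hom F, forall a, F (i1 a) = f1 a & forall b, F (i2 b) = f2 b].
Proof.
move=> hi1 hi2 hf1 hf2 dec.
have [pr prP] : exists pr : wcar N -> wcar M1 * wcar M2,
    forall z, z = i1 (pr z).1 + i2 (pr z).2.
  apply: (@choice_fun _ (fun _ => (wcar M1 * wcar M2)%type)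
    (fun z ab => z = i1 ab.1 + i2 ab.2) (fun _ => inhabits (0, 0))) => z.
  by have [a [b [e _]]] := dec z; exists (a, b).
have prU z a b : z = i1 a + i2 b -> pr z = (a, b).
  move=> e; have [a0 [b0 [_ u]]] := dec z.
  have [-> ->] := u _ _ e; have [<- <-] := u _ _ (prP z).
  by case: (pr z).
have [i1l i2l] := (hom_lin hi1, hom_lin hi2).
exists (fun z => f1 (pr z).1 + f2 (pr z).2); split.
- split.
  + move=> c z z'.
    rewrite (prU (c *: z + z') (c *: (pr z).1 + (pr z').1) (c *: (pr z).2 + (pr z').2)).
      by rewrite /= (hom_lin hf1) (hom_lin hf2) scalerDr addrACA.
    by rewrite i1l i2l {1}(prP z) {1}(prP z') scalerDr addrACA.
  + move=> u n z.
    rewrite (prU (wY u n z) (wY u n (pr z).1) (wY u n (pr z).2)).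
      by rewrite /= (proj2 hf1) (proj2 hf2) (linD (@wY_lin X u n)).
    by rewrite (proj2 hi1) (proj2 hi2) -(linD (@wY_lin N u n)) -prP.
- by move=> a; rewrite (prU (i1 a) a 0) /= ?(lin0 (hom_lin hf2)) ?(lin0 i2l) addr0.
- by move=> b; rewrite (prU (i2 b) 0 b) /= ?(lin0 (hom_lin hf1)) ?(lin0 i1l) add0r.
Qed.
End Homomorphisms.

Section DirectLimits.
Local Unset Implicit Arguments.
Variables (V : VOA) (I : Type) (le : I -> I -> Prop) (obj : I -> wmod V)
  (f : forall i j, wcar (obj i) -> wcar (obj j)) (L : wmod V)
  (phi : forall i, wcar (obj i) -> wcar L).
Hypothesis hlim : is_direct_limit le f phi.

Lemma limit_endo_id (h : wcar L -> wcar L) :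
  is_hom h -> (forall i x, h (phi i x) = phi i x) -> forall z, h z = z.
Proof.
case: hlim => cphi hU; have [mediating [_ _ uniq]] := hU L phi cphi.
by move=> hh hphi z; rewrite (uniq h hh hphi) -(uniq id) //.
Qed.

(* A submodule of the limit containing all images of the canonical maps is
   everything: the cocone corestricts to it, and the induced map back is a
   section of its inclusion. *)
Lemma limit_submodule_full (P : wcar L -> Prop) :
  submodule P -> (forall i x, P (phi i x)) -> forall z, P z.
Proof.
move=> hP Pphi; have [S [s [hs injs ims]]] := submodule_as_image hP.
have [psi hpsi] : exists psi : forall i, wcar (obj i) -> wcar S,
    forall i x, s (psi i x) = phi i x.
  have [g hg] := choice_fun (B := fun ix : {i : I & wcar (obj i)} => wcar S)
    (R := fun ix t => s t = phi (projT1 ix) (projT2 ix))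
    (fun _ => inhabits 0) (fun ix => proj1 (ims _) (Pphi _ _)).
  by exists (fun i x => g (existT _ i x)) => i x; exact: hg.
case: hlim => [[cl cc] hU].
have cpsi : cocone le f psi.
  split.
  - move=> i; split.
    + by move=> a x y; apply: injs; rewrite (hom_lin hs) !hpsi (hom_lin (cl i)).
    + by move=> u n x; apply: injs; rewrite (proj2 hs) !hpsi (proj2 (cl i)).
  - by move=> i j x lij; apply: injs; rewrite !hpsi cc.
have [h [hh hhphi _]] := hU S psi cpsi.
have s_h : forall z, s (h z) = z.
  by apply: (limit_endo_id _ (hom_comp hh hs)) => i x; rewrite hhphi hpsi.
by move=> z; apply/ims; exists (h z).
Qed.

(* Over a directed set, the union of the images of the canonical maps is a
   submodule, hence all of the limit. *)
Lemma limit_jointly_surjective :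
  directed le -> forall z, exists i x, z = phi i x.
Proof.
move=> [[i0 _] _ _ up]; case: (hlim) => [[cl cc] _].
apply: limit_submodule_full => [|i x]; last by exists i, x.
split.
- by exists i0, 0; rewrite (lin0 (hom_lin (cl i0))).
- move=> a _ _ [i1 [x1 ->]] [i2 [x2 ->]].
  have [k [l1 l2]] := up i1 i2.
  by exists k, (a *: f i1 k x1 + f i2 k x2); rewrite (hom_lin (cl k)) !cc.
- by move=> u n _ [i [x ->]]; exists i, (wY u n x); rewrite (proj2 (cl i)).
Qed.
End DirectLimits.
Arguments limit_jointly_surjective {V I le obj f L phi}.

Section SubmodulesInC.
Variables (V : VOA) (C : modclass V).
Hypothesis hC : good_class C.

(* The image of a homomorphism out of an object of C is a submodule lying
   in C: it is isomorphic to the quotient by the kernel. *)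
Lemma image_in (X N : wmod V) (F : wcar N -> wcar X) :
  C N -> is_hom F ->
  submodule (fun x => exists y, F y = x) /\ sub_in C (fun x => exists y, F y = x).
Proof.
move=> CN hF; have Fl := hom_lin hF; case: (hF) => _ hFY.
split.
  split; first by exists 0; exact: lin0.
  - by move=> a x y [x' <-] [y' <-]; exists (a *: x' + y'); rewrite Fl.
  - by move=> u n x [x' <-]; exists (wY u n x').
case: hC => _ _ _ quot _.
have hK : submodule (fun y : wcar N => F y = 0).
  split; first exact: lin0.
  - by move=> a x y hx hy; rewrite Fl hx hy scaler0 addr0.
  - by move=> u n x hx; rewrite hFY hx (lin0 (@wY_lin V X u n)).
have [N' [p [CN' hp psurj pker]]] := quot N CN _ hK.
have pl := hom_lin hp; case: (hp) => _ hpY.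
have [s hs] := choice_fun (fun _ => inhabits (0 : wcar N)) psurj.
have F_factor y1 y2 : p y1 = p y2 -> F y1 = F y2.
  move=> e; have : p (y1 - y2) = 0 by rewrite (linB pl) e subrr.
  by move/pker; rewrite (linB Fl) => /eqP; rewrite subr_eq0 => /eqP.
exists N', (fun y => F (s y)); split => //.
- split.
  + by move=> a y1 y2; rewrite -Fl; apply: F_factor; rewrite pl !hs.
  + by move=> u n y; rewrite -hFY; apply: F_factor; rewrite hpY !hs.
- move=> y1 y2 e.
  have : F (s y1 - s y2) = 0 by rewrite (linB Fl) e subrr.
  by move/pker; rewrite (linB pl) !hs => /eqP; rewrite subr_eq0 => /eqP.
- move=> x; split; last by case=> y <-; exists (s y).
  by case=> y <-; exists (p y); apply: F_factor; rewrite hs.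
Qed.

Variable X : wmod V.

Definition inclW (W W' : IX C X) : Prop := forall y, sval W y -> sval W' y.

Lemma IX_sub (W : IX C X) : submodule (sval W).
Proof. exact: (proj1 (svalP W)). Qed.

Definition mkIX (N : wmod V) (F : wcar N -> wcar X) (CN : C N) (hF : is_hom F) : IX C X :=
  exist _ (fun x => exists y, F y = x) (image_in CN hF).

(* I_X is directed: it contains the zero submodule, and the sum of two
   members, the image of their direct sum, is again a member. *)
Lemma IX_directed : directed inclW.
Proof.
split => [| W y | W1 W2 W3 h1 h2 y /h1 /h2 | W1 W2] //.
  case: hC => _ [M0 [CM0 _]] _ _ _.
  have h0 : is_hom (fun _ : wcar M0 => (0 : wcar X)).
    split=> [a x y|u n _]; first by rewrite scaler0 addr0.
    by rewrite (lin0 (@wY_lin V X u n)).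
  by exists (mkIX CM0 h0).
case: (svalP W1) => _ [N1 [f1 [C1 hf1 _ im1]]].
case: (svalP W2) => _ [N2 [f2 [C2 hf2 _ im2]]].
case: hC => _ _ _ _ dsum.
have [N [i1 [i2 [CN hi1 hi2 dec]]]] := dsum N1 N2 C1 C2.
have [F [hF Fi1 Fi2]] := direct_sum_extend hi1 hi2 hf1 hf2 dec.
exists (mkIX CN hF); split.
- by move=> x /im1 [a <-]; exists (i1 a).
- by move=> x /im2 [b <-]; exists (i2 b).
Qed.

(* alpha_X as a direct system in C: each W is replaced by a chosen object
   objW W of C together with an isomorphism fW W onto W. *)
Definition objW (W : IX C X) : wmod V :=
  sval (constructive_indefinite_description _ (proj2 (svalP W))).
Definition fW (W : IX C X) : wcar (objW W) -> wcar X :=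
  sval (constructive_indefinite_description _
    (svalP (constructive_indefinite_description _ (proj2 (svalP W))))).
Arguments fW : clear implicits.

Lemma fW_spec W : [/\ C (objW W), is_hom (fW W), injective (fW W)
   & forall x, sval W x <-> exists y, fW W y = x].
Proof.
exact: (svalP (constructive_indefinite_description _
    (svalP (constructive_indefinite_description _ (proj2 (svalP W)))))).
Qed.

Definition invW (W : IX C X) (x : wcar X) : wcar (objW W) :=
  epsilon (inhabits 0) (fun y => fW W y = x).
Arguments invW : clear implicits.

Lemma invWK W x : sval W x -> fW W (invW W x) = x.
Proof.
by case: (fW_spec W) => _ _ _ im /im ex; exact: (epsilon_spec _ (fun y => fW W y = x) ex).
Qed.

Lemma fW_in W y : sval W (fW W y).
Proof. by case: (fW_spec W) => _ _ _ im; apply/im; exists y. Qed.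

Lemma fWK W y : invW W (fW W y) = y.
Proof. by case: (fW_spec W) => _ _ inj _; apply: inj; rewrite invWK //; exact: fW_in. Qed.

Lemma invW_lin W (a : Cc) x y : sval W x -> sval W y ->
  invW W (a *: x + y) = a *: invW W x + invW W y.
Proof.
move=> hx hy; case: (fW_spec W) => _ hf inj _; apply: inj.
by rewrite (hom_lin hf) !invWK //; apply: Plin (IX_sub W) _ _ _ hx hy.
Qed.

Lemma invW_Y W u n x : sval W x -> invW W (wY u n x) = wY u n (invW W x).
Proof.
move=> hx; case: (fW_spec W) => _ hf inj _; apply: inj.
by rewrite (proj2 hf) !invWK //; apply: PY (IX_sub W) _ _ _ hx.
Qed.

Definition trW (W W' : IX C X) (y : wcar (objW W)) : wcar (objW W') := invW W' (fW W y).

Lemma IX_system : direct_system C inclW trW.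
Proof.
split.
- exact: IX_directed.
- by move=> W; case: (fW_spec W).
- move=> W W' inc; case: (fW_spec W) => _ hf _ _; split.
  + by move=> a x y; rewrite /trW (hom_lin hf) invW_lin //; apply: inc; apply: fW_in.
  + by move=> u n x; rewrite /trW (proj2 hf) invW_Y //; apply: inc; apply: fW_in.
- by move=> W x; rewrite /trW fWK.
- by move=> W1 W2 W3 x h1 _; rewrite /trW invWK //; apply: h1; apply: fW_in.
Qed.

Lemma IX_limit (L : wmod V) (phi : IX C X -> wcar X -> wcar L) :
  is_direct_limit_X phi -> is_direct_limit inclW trW (fun W y => phi W (fW W y)).
Proof.
move=> [[cl cc] hU].
have cphi : cocone inclW trW (fun W y => phi W (fW W y)).
  split.
  - move=> W; case: (fW_spec W) => _ hf _ _; split.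
    + by move=> a x y; rewrite (hom_lin hf) (cl W).1 //; apply: fW_in.
    + by move=> u n x; rewrite (proj2 hf) (cl W).2 //; apply: fW_in.
  - move=> W W' x inc; rewrite /trW invWK; last by apply: inc; apply: fW_in.
    by apply: cc => //; apply: fW_in.
split => // Y psi [pl pc].
pose psiX W x := psi W (invW W x).
have cX : cocone_X psiX.
  split.
  - move=> W; split.
    + by move=> a x y hx hy; rewrite /psiX invW_lin // (hom_lin (pl W)).
    + by move=> u n x hx; rewrite /psiX invW_Y // (proj2 (pl W)).
  - move=> W W' x inc hx; rewrite /psiX.
    have [y <-] : exists y, fW W y = x by case: (fW_spec W) => _ _ _ im; apply/im.
    by rewrite fWK -(pc W W' y inc).
have [h [hh hphi hu]] := hU Y psiX cX.
exists h; split => //.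
- by move=> W x; rewrite hphi; [rewrite /psiX fWK | exact: fW_in].
- by move=> h' hh' e; apply: hu => // W x hx; rewrite -(invWK hx) e /psiX fWK.
Qed.

Lemma IX_limit_generated (L : wmod V) (phi : IX C X -> wcar X -> wcar L) :
  is_direct_limit_X phi -> forall z, exists W x, sval W x /\ z = phi W x.
Proof.
move=> hL z.
have [W [y ->]] := limit_jointly_surjective (IX_limit hL) IX_directed z.
by exists W, (fW W y); split; first exact: fW_in.
Qed.
End SubmodulesInC.

Section ComparisonMap.
Variables (V : VOA) (C : modclass V) (X L : wmod V).
Hypothesis hC : good_class C.
Variables (phi : IX C X -> wcar X -> wcar L) (Q : wcar L -> wcar X).
Hypothesis hL : is_direct_limit_X phi.
Hypothesis hQphi : forall (W : IX C X) (x : wcar X), sval W x -> Q (phi W x) = x.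

Lemma Q_injective : injective Q.
Proof.
move=> z1 z2.
have [W1 [x1 [h1 ->]]] := IX_limit_generated hC hL z1.
have [W2 [x2 [h2 ->]]] := IX_limit_generated hC hL z2.
have [_ _ _ upper] := IX_directed hC X.
have [W [i1 i2]] := upper W1 W2.
rewrite !hQphi // => ex; subst x2.
have cc := (proj1 hL).2.
by rewrite -(cc W1 W x1 i1 h1) -(cc W2 W x1 i2 h2).
Qed.

(* If Q is onto, it is an isomorphism from the direct limit of the system
   IX_system in C, so X lies in Ind(C). *)
Lemma Q_surjective_Ind : is_hom Q -> (forall x, exists z, Q z = x) -> in_Ind C X.
Proof.
move=> hQ surj; have [Qi QiK] := choice_fun (fun _ => inhabits (0 : wcar L)) surj.
exists (IX C X), (@inclW V C X), (@objW V C X), (@trW V C X), L,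
  (fun W y => phi W (@fW V C X W y)), Q; split => //.
- exact: IX_system.
- exact: IX_limit.
- by exists Qi => // z; apply: Q_injective; rewrite QiK.
Qed.

(* If X is a direct limit of a system in C, each x in X comes from some
   object of C, whose image is a member W of I_X containing x. *)
Lemma Ind_Q_surjective : in_Ind C X -> forall x, exists z, Q z = x.
Proof.
move=> [I [le [obj [f [L0 [phi0 [g [ds dl hg [ginv _ Kg]]]]]]]]] x.
have [dir Cobj _ _ _] := ds.
have [i [y ey]] := limit_jointly_surjective dl dir (ginv x).
have hgi : is_hom (fun y => g (phi0 i y)) by apply: hom_comp hg; exact: dl.1.1.
pose W : IX C X := mkIX hC (Cobj i) hgi.
have Wx : sval W x by exists y; rewrite /= -ey Kg.
by exists (phi W x); apply: hQphi.
Qed.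
End ComparisonMap.

Theorem proposition4 (V : VOA) (C : modclass V) (hC : good_class C)
  (X : wmod V) (L : wmod V) (phi : IX C X -> wcar X -> wcar L)
  (hL : is_direct_limit_X phi)
  (Q : wcar L -> wcar X) (hQ : is_hom Q)
  (hQphi : forall (W : IX C X) (x : wcar X), sval W x -> Q (phi W x) = x) :
  injective Q /\ ((forall x : wcar X, exists z, Q z = x) <-> in_Ind C X).
Proof.
split; first exact: (Q_injective hC hL hQphi).
split; first exact: (Q_surjective_Ind hC hL hQphi hQ).
exact: (Ind_Q_surjective hC hQphi).
Qed.
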